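(* Let $H^*$ be a $k$-factor on $[n]$ and $G\supseteq H^*$ a simple graph on $[n]$. If a planted edge $e\in H^*$ belongs to an alternating circuit in $G$, then $e$ belongs to the core $C_n$ produced by the iterative pruning algorithm run on $G$.
   Context: A $k$-factor on $[n]$ is a $k$-regular simple graph with vertex set $[n]$, identified with its edge set. Edges of $H^*$ are planted (red), edges of $G$ not in $H^*$ are unplanted (blue). An alternating circuit is a closed walk in $G$ with pairwise distinct edges (vertices may repeat) whose edges alternate between planted and unplanted, including between the last and the first edge. Iterative pruning algorithm: assign each vertex $i$ capacity $\kappa_i=k$. Repeat as long as possible: pick a vertex $v$ of the current graph whose current degree equals its current capacity; declare all edges incident to $v$ planted, delete $v$ and its incident edges, and decrease by one the capacity of the other endpoint of each deleted edge; then every vertex whose capacity has dropped to $0$ is deleted together with all its incident edges. The procedure stops when every remaining vertex has degree strictly larger than its capacity. The core $C_n$ is the remaining graph at termination. *)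

From mathcomp Require Import all_boot.
Set Implicit Arguments. Unset Strict Implicit. Unset Printing Implicit Defensive.

(* Vertex set [n] is 'I_n; a graph is identified with its edge set, each edge
   being a 2-element subset of 'I_n. *)
Definition graph (n : nat) := {set {set 'I_n}}.

Definition simple_graph n (G : graph n) : Prop :=
  forall e, e \in G -> #|e| = 2.

Definition k_factor n (k : nat) (H : graph n) : Prop :=
  simple_graph H /\ forall v : 'I_n, #|[set e in H | v \in e]| = k.

(* The edges traversed by the closed walk visiting vs = [v_0; ...; v_{m-1}]
   and returning to v_0: {v_i, v_{i+1 mod m}}. *)
Definition walk_edges n (vs : seq 'I_n) : seq {set 'I_n} :=
  [seq [set p.1; p.2] | p <- zip vs (rot 1 vs)].

Definition alternating_circuit n (H G : graph n) (vs : seq 'I_n) : Prop :=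
  let es := walk_edges vs in
  [/\ all (fun e => e \in G) es, uniq es &
      cycle (fun a b => (a \in H) != (b \in H)) es].

(* ---- Iterative pruning algorithm ----
   A state is (V, cap): remaining vertex set and current capacities.
   The current graph is the subgraph of G induced on V. *)
Definition cur_deg n (G : graph n) (V : {set 'I_n}) (v : 'I_n) : nat :=
  #|[set e in G | (v \in e) && (e \subset V)]|.

Definition cur_adj n (G : graph n) (V : {set 'I_n}) (v u : 'I_n) : bool :=
  [&& u \in V, v \in V, u != v & [set v; u] \in G].

Definition prune_state n := ({set 'I_n} * ('I_n -> nat))%type.

Inductive prune_step n (G : graph n) : prune_state n -> prune_state n -> Prop :=
| PruneStep (V : {set 'I_n}) (cap : 'I_n -> nat) (v : 'I_n) :
    v \in V -> cur_deg G V v = cap v ->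
    let cap' := fun u => if cur_adj G V v u then (cap u).-1 else cap u in
    let V' := [set u in V :\ v | ~~ (cur_adj G V v u && (cap' u == 0))] in
    prune_step G (V, cap) (V', cap').

Inductive prune_reach n (G : graph n) : prune_state n -> prune_state n -> Prop :=
| prune_refl s : prune_reach G s s
| prune_trans s1 s2 s3 : prune_step G s1 s2 -> prune_reach G s2 s3 ->
    prune_reach G s1 s3.

Definition prune_init n (k : nat) : prune_state n := (setT, fun _ => k).

Definition prune_terminal n (G : graph n) (s : prune_state n) : Prop :=
  forall v, v \in s.1 -> cur_deg G s.1 v != s.2 v.

(* Edge set of the current (remaining) graph; at termination this is the core. *)
Definition cur_graph n (G : graph n) (V : {set 'I_n}) : graph n :=
  [set e in G | e \subset V].

From mathcomp Require Import all_boot.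

Set Implicit Arguments.
Unset Strict Implicit.
Unset Printing Implicit Defensive.

(* All edges at a vertex v that is chosen by a pruning step are planted: its
   capacity is always its number of remaining planted edges, and it equals its
   remaining degree.  Hence no vertex of an alternating circuit is ever
   chosen, since each such vertex keeps an unplanted circuit edge.  Nor is
   one ever deleted with capacity 0: a circuit vertex adjacent to the chosen
   v has a planted edge to v and another planted circuit edge avoiding v, so
   its capacity was at least 2.  The vertex set of the circuit therefore
   survives, and with it every circuit edge. *)

Section ZipRot.

Variables S T : Type.

Lemma zip_drop i (s : seq S) (t : seq T) :
  zip (drop i s) (drop i t) = drop i (zip s t).
Proof.
by elim: s i t => [|x s IHs] [|i] [|y t] //=; case: (drop _ _).
Qed.

Lemma zip_take i (s : seq S) (t : seq T) :
  zip (take i s) (take i t) = take i (zip s t).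
Proof.
by elim: s i t => [|x s IHs] [|i] [|y t] //=; rewrite ?IHs //; case: (take _ _).
Qed.

Lemma zip_rot i (s : seq S) (t : seq T) :
  size s = size t -> zip (rot i s) (rot i t) = rot i (zip s t).
Proof.
by move=> eq_st; rewrite /rot zip_cat ?zip_drop ?zip_take // !size_drop eq_st.
Qed.

End ZipRot.

Lemma mem_zip (S T : eqType) (s : seq S) (t : seq T) p :
  p \in zip s t -> p.1 \in s /\ p.2 \in t.
Proof.
elim: s t => [|x s IHs] [|y t] //=; rewrite inE => /orP[/eqP-> | /IHs[ps pt]].
  by split; apply: mem_head.
by rewrite !inE ps pt !orbT.
Qed.

Lemma set2_sub (T : finType) x y (A : {set T}) :
  x \in A -> y \in A -> [set x; y] \subset A.
Proof. by move=> xA yA; apply/subsetP=> z; rewrite !inE => /orP[]/eqP->. Qed.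

Lemma card2_set2 (T : finType) (e : {set T}) u w :
  #|e| = 2 -> u \in e -> w \in e -> u != w -> e = [set u; w].
Proof.
move=> card_e ue we uw.
by apply/eqP; rewrite eq_sym eqEcard cards2 uw card_e set2_sub.
Qed.

Section AlternatingCircuit.

Variables (n : nat) (Hs G : graph n).

Lemma walk_edges_rot i (vs : seq 'I_n) :
  walk_edges (rot i vs) = rot i (walk_edges vs).
Proof. by rewrite /walk_edges rot_rot zip_rot ?size_rot // map_rot. Qed.

Lemma walk_edges_cons x (s : seq 'I_n) :
  walk_edges (x :: s) = pairmap (fun a b => [set a; b]) x (rcons s x).
Proof.
rewrite /walk_edges rot1_cons.
by elim: s {1 3}x => [|y s IHs] z //=; rewrite IHs.
Qed.

Lemma walk_edge_sub (vs : seq 'I_n) e :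
  e \in walk_edges vs -> e \subset [set x in vs].
Proof.
case/mapP=> p /mem_zip[p1 p2] ->; rewrite mem_rot in p2.
by rewrite set2_sub ?inE.
Qed.

Definition alternating_support (S : {set 'I_n}) : Prop :=
  forall x, x \in S ->
    (exists f, [/\ f \in G, f \notin Hs, x \in f & f \subset S]) /\
    (exists f, [/\ f \in Hs, x \in f & f \subset S]).

Lemma alternating_circuit_at (vs : seq 'I_n) x :
  alternating_circuit Hs G vs -> x \in vs ->
  exists a b, [/\ a \in walk_edges vs, b \in walk_edges vs, x \in a, x \in b &
                  (a \in Hs) != (b \in Hs)].
Proof.
case=> _ _ alt /rot_to[i s vs_rot].
rewrite -(rot_cycle i) -walk_edges_rot vs_rot in alt.
case: s vs_rot alt => [|y s] vs_rot; first by rewrite walk_edges_cons /= eqxx.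
set f := fun a b : 'I_n => [set a; b].
have walk_xys : walk_edges (x :: y :: s) = f x y :: pairmap f y s ++ [:: f (last y s) x].
  by rewrite walk_edges_cons -cats1 pairmap_cat.
have mem_vs e : e \in walk_edges (x :: y :: s) -> e \in walk_edges vs.
  by rewrite -vs_rot walk_edges_rot mem_rot.
rewrite walk_xys (cycle_path (f x y)) /= last_cat /= => /andP[alt _].
exists (f (last y s) x), (f x y); split => //.
- by apply: mem_vs; rewrite walk_xys inE mem_cat mem_seq1 eqxx !orbT.
- by apply: mem_vs; rewrite walk_xys mem_head.
- by rewrite set22.
- by rewrite set21.
Qed.

Lemma alternating_circuit_support (vs : seq 'I_n) :
  alternating_circuit Hs G vs -> alternating_support [set x in vs].
Proof.
move=> circ x; rewrite inE => x_vs.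
have [a [b [a_vs b_vs xa xb]]] := alternating_circuit_at circ x_vs.
have [/allP inG _ _] := circ.
have [aS bS] := (walk_edge_sub a_vs, walk_edge_sub b_vs).
case: (a \in Hs) / boolP => aH /=; rewrite ?negbK => bH.
- by split; [exists b | exists a]; split; rewrite ?inG.
- by split; [exists a | exists b]; split; rewrite ?inG.
Qed.

End AlternatingCircuit.

Definition planted_capacity n (Hs : graph n) (s : prune_state n) : Prop :=
  forall u, u \in s.1 -> s.2 u = cur_deg Hs s.1 u.

Definition pruned_cap n (G : graph n) V (cap : 'I_n -> nat) v : 'I_n -> nat :=
  fun u => if cur_adj G V v u then (cap u).-1 else cap u.

Definition pruned_set n (G : graph n) V (cap : 'I_n -> nat) v : {set 'I_n} :=
  [set u in V :\ v | ~~ (cur_adj G V v u && (pruned_cap G V cap v u == 0))].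

Section PruneStep.

Variables (n : nat) (Hs G : graph n) (V : {set 'I_n}) (cap : 'I_n -> nat).
Variable v : 'I_n.
Hypotheses (simpleG : simple_graph G) (HsG : Hs \subset G).
Hypotheses (capV : planted_capacity Hs (V, cap)) (vV : v \in V).
Hypothesis deg_v : cur_deg G V v = cap v.

Let cap' := pruned_cap G V cap v.
Let V' := pruned_set G V cap v.

Let capE u : u \in V -> cap u = cur_deg Hs V u. Proof. exact: capV. Qed.

Lemma saturated_edge_planted e : e \in G -> v \in e -> e \subset V -> e \in Hs.
Proof.
set EG := [set f in G | (v \in f) && (f \subset V)].
have sub : [set f in Hs | (v \in f) && (f \subset V)] \subset EG.
  by apply/subsetP=> f; rewrite !inE => /andP[/(subsetP HsG) ->].
have eqE : [set f in Hs | (v \in f) && (f \subset V)] = EG.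
  by apply/eqP; rewrite eqEcard sub /=; move: deg_v; rewrite capE // /cur_deg -/EG => ->.
move=> eG ve eV; have : e \in EG by rewrite inE eG ve.
by rewrite -eqE inE => /andP[].
Qed.

Lemma cur_adj_planted x : cur_adj G V v x -> [set v; x] \in Hs.
Proof.
case/and4P=> xV _ _ vxG; apply: saturated_edge_planted vxG _ _.
  by rewrite set21.
exact: set2_sub.
Qed.

Lemma pruned_cap_gt0 x f :
  cur_adj G V v x -> f \in Hs -> x \in f -> f \subset V -> v \notin f -> 0 < cap' x.
Proof.
move=> adj fHs xf fV vf.
have xV : x \in V by case/and4P: adj.
suff : 1 < cap x by rewrite /cap' /pruned_cap adj; case: (cap x) => [|[]].
rewrite capE //; apply/card_gt1P; exists [set v; x], f; split.
- by rewrite inE cur_adj_planted // set22 set2_sub.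
- by rewrite inE fHs xf.
- by apply: contraNneq vf => <-; rewrite set21.
Qed.

Lemma planted_edge_pruned_set f :
  f \in Hs -> f \subset V -> v \notin f -> f \subset V'.
Proof.
move=> fHs fV vf; apply/subsetP=> y yf.
have yv : y != v by apply: contraNneq vf => <-.
rewrite inE in_setD1 yv (subsetP fV) //=; apply/nandP.
case adj: (cur_adj G V v y); last by left.
by right; rewrite -lt0n; apply: pruned_cap_gt0 adj fHs yf fV vf.
Qed.

Lemma card_planted_through_v u : u \in V -> u != v ->
  #|[set e in Hs | [&& u \in e, e \subset V & v \in e]]| = cur_adj G V v u.
Proof.
move=> uV uv; case adj: (cur_adj G V v u).
  rewrite /= -(cards1 [set v; u]); apply: eq_card => e; rewrite !inE.
  apply/idP/eqP => [/and4P[eHs ue _ ve] | ->].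
    by apply: card2_set2; rewrite // ?simpleG ?(subsetP HsG) // eq_sym.
  by rewrite cur_adj_planted // set22 set21 set2_sub.
apply/eqP; rewrite /= cards_eq0; apply/eqP/setP=> e; rewrite !inE.
apply/negP=> /and4P[eHs ue eV ve]; move/negP: adj; apply.
have eG := subsetP HsG e eHs.
have e_vu : e = [set v; u] by apply: card2_set2; rewrite ?simpleG // eq_sym.
by rewrite /cur_adj uV vV -e_vu eG uv.
Qed.

Lemma pruned_set_sub : V' \subset V :\ v.
Proof. by apply/subsetP=> u; rewrite inE => /andP[]. Qed.

Lemma planted_sub_pruned_set e :
  e \in Hs -> (e \subset V') = (e \subset V) && (v \notin e).
Proof.
move=> eHs; apply/idP/andP=> [eV' | [eV ve]]; last exact: planted_edge_pruned_set.
have eVv := subset_trans eV' pruned_set_sub.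
split; first exact: subset_trans eVv (subsetDl _ _).
by apply/negP=> /(subsetP eVv); rewrite !inE eqxx.
Qed.

Lemma cur_deg_pruned_set u : u \in V' ->
  cur_deg Hs V u = cur_deg Hs V' u + cur_adj G V v u.
Proof.
move=> uV'; have /setD1P[uv uV] := subsetP pruned_set_sub u uV'.
rewrite /cur_deg -(cardsID [set e : {set 'I_n} | v \in e]).
rewrite addnC -card_planted_through_v //; congr (_ + _); apply: eq_card => e.
  rewrite !inE; case eHs: (e \in Hs); rewrite ?andbF // planted_sub_pruned_set //.
  by rewrite andbC -!andbA.
by rewrite !inE -!andbA.
Qed.

Lemma pruned_planted_capacity : planted_capacity Hs (V', cap').
Proof.
move=> u uV' /=; have /setD1P[_ uV] := subsetP pruned_set_sub u uV'.
rewrite /cap' /pruned_cap capE // cur_deg_pruned_set //.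
by case: (cur_adj G V v u); rewrite ?addn1 ?addn0.
Qed.

Lemma alternating_support_pruned_set S :
  alternating_support Hs G S -> S \subset V -> S \subset V'.
Proof.
move=> altS SV.
have vS : v \notin S.
  apply/negP=> /altS[[f [fG fHs vf fS]] _].
  by move: fHs; rewrite (saturated_edge_planted fG vf (subset_trans fS SV)).
apply/subsetP=> x /altS[_ [f [fHs xf fS]]].
have vf : v \notin f by apply: contra vS => /(subsetP fS).
exact: subsetP (planted_edge_pruned_set fHs (subset_trans fS SV) vf) x xf.
Qed.

End PruneStep.

Lemma prune_reach_invariant n (Hs G : graph n) S s s' :
  simple_graph G -> Hs \subset G -> alternating_support Hs G S ->
  prune_reach G s s' -> planted_capacity Hs s -> S \subset s.1 ->
  planted_capacity Hs s' /\ S \subset s'.1.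
Proof.
move=> simpleG HsG altS; elim=> {s s'} [// | s1 s2 s3 step _ IHs] cap1 S1.
case: step IHs cap1 S1 => V cap v vV deg_v cap' V' IHs capV SV; apply: IHs.
  exact: pruned_planted_capacity.
exact: alternating_support_pruned_set altS SV.
Qed.

Lemma k_factor_planted_capacity n k (Hs : graph n) :
  k_factor k Hs -> planted_capacity Hs (prune_init n k).
Proof.
case=> _ regHs u _; rewrite /= -(regHs u); apply: eq_card => e.
by rewrite !inE subsetT andbT.
Qed.

Theorem mainTheorem14 (n k : nat) (Hs G : graph n) :
  k_factor k Hs -> simple_graph G -> Hs \subset G ->
  forall (e : {set 'I_n}) (vs : seq 'I_n),
    e \in Hs -> alternating_circuit Hs G vs -> e \in walk_edges vs ->
  forall final : prune_state n,
    prune_reach G (prune_init n k) final -> prune_terminal G final ->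
    e \in cur_graph G final.1.
Proof.
move=> kHs simpleG HsG e vs _ circ e_vs final reach _.
have altS := alternating_circuit_support circ.
have [_ S_final] := prune_reach_invariant simpleG HsG altS reach
  (k_factor_planted_capacity kHs) (subsetT _).
have [/allP inG _ _] := circ.
by rewrite inE inG // (subset_trans (walk_edge_sub e_vs) S_final).
Qed.
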